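(* Fix a finite complete graph $K$, a vertex $x\in V(K)$, an edge probability measure $\mu$ on $E(K)$, and an integer $m\ge 2$. Then \[ \sum_{\substack{P\in\mathrm{cp}(K,P_{m+1}),\\ \deg_P(x)=1}}\mu(P)\le\bar\mu(x)\Bigl(\frac{1-\bar\mu(x)}{m-1}\Bigr)^{m-1}. \]
   Context: $P_{m+1}$ is the path on $m+1$ vertices; $\mathrm{cp}(K,P_{m+1})$ is the set of subgraphs of $K$ isomorphic to $P_{m+1}$. An edge probability measure on $K$ is a probability measure $\mu$ on $E(K)$; for a subgraph $H\subseteq K$, $\mu(H)=\prod_{e\in E(H)}\mu(e)$; and $\bar\mu(x)=\sum_{y\in V(K)\setminus\{x\}}\mu(xy)$. *)

From mathcomp Require Import all_boot all_order all_algebra.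
Set Implicit Arguments. Unset Strict Implicit. Unset Printing Implicit Defensive.
Import Order.TTheory GRing.Theory Num.Theory.
Local Open Scope ring_scope.

(* The complete graph K on a finite vertex type V: its edges are the
   2-element subsets of V. A subgraph is identified with its edge set
   (a copy of a path P_{m+1}, m >= 1, has no isolated vertex, so its
   vertex set is determined by its edges). *)
Section Defs.
Variable V : finType.

Definition is_edge (e : {set V}) : bool := #|e| == 2.

Definition path_edges (s : seq V) : {set {set V}} :=
  [set e in [seq [set p.1; p.2] | p <- zip s (behead s)]].

Definition is_path_copy (m : nat) (E : {set {set V}}) : bool :=
  [exists t : (m.+1).-tuple V, uniq t && (E == path_edges t)].

Definition deg_in (E : {set {set V}}) (x : V) : nat :=
  #|[set e in E | x \in e]|.

Variable R : realFieldType.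

Definition edge_prob_measure (mu : {set V} -> R) : Prop :=
  (forall e, is_edge e -> 0 <= mu e) /\ \sum_(e | is_edge e) mu e = 1.

Definition mu_sub (mu : {set V} -> R) (E : {set {set V}}) : R :=
  \prod_(e in E) mu e.

Definition mubar (mu : {set V} -> R) (x : V) : R :=
  \sum_(y | y != x) mu [set x; y].

End Defs.

From mathcomp Require Import all_boot all_order all_algebra.
Set Implicit Arguments. Unset Strict Implicit. Unset Printing Implicit Defensive.
Import Order.TTheory GRing.Theory Num.Theory.
Local Open Scope ring_scope.

(* If x has degree 1 in a copy of P_{m+1}, the copy is the edge set of a path
   x v_1 ... v_m with the v_i distinct vertices of A = V \ {x}; hence the sum is
   at most the weight f_m(A, x) of all such paths. Splitting off the first step,
   f_{k+1}(A, v) = sum_{a in A} mu(va) f_k(A \ a, a), and induction gives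
   f_{k+1}(A, v) <= d_A(v) (W(A) / k)^k, where d_A(v) is the weight of the
   edges from v to A and W(A) that of the edges inside A: the step combines
   d_{A\a}(a) + W(A \ a) = W(A) with AM-GM in the form
   D (W / k)^k <= ((D + W) / (k + 1))^(k + 1).
   For A = V \ {x} we have d_A(x) = mubar(x) and W(A) = 1 - mubar(x).
   Below, f, d and W are path_sum, link_weight and inner_weight. *)

Lemma AGM_mul_exp (R : realFieldType) (D W : R) k :
  0 <= D -> 0 <= W -> D * (W / k%:R) ^+ k <= ((D + W) / k.+1%:R) ^+ k.+1.
Proof.
move=> D_ge0 W_ge0; case: k => [|k]; first by rewrite mulr1 divr1 expr1 lerDl.
set a := W / k.+1%:R.
have -> : W = a *+ k.+1 by rewrite -mulr_natr divfK ?pnatr_eq0.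
pose E (i : 'I_k.+2) := if i == ord0 then D else a.
have E0 : E ord0 = D by rewrite /E eqxx.
have E_lift (i : 'I_k.+1) : E (lift ord0 i) = a.
  by rewrite /E eq_sym (negbTE (neq_lift _ _)).
have E_ge0 : {in predT, forall i, 0 <= E i}.
  by move=> i _; rewrite /E; case: ifP; rewrite ?divr_ge0.
have [AGM _] := leif_AGM E_ge0; move: AGM; rewrite card_ord.
rewrite (eq_bigl xpredT) // [X in _ <= (X / _) ^+ _](eq_bigl xpredT) //.
rewrite !(big_ord_recl k.+1) E0 !(eq_bigr _ (fun i _ => E_lift i)).
by rewrite prodr_const sumr_const card_ord.
Qed.

Lemma ler_sum_cover (R : numDomainType) (T : finType) (U : eqType)
    (P : pred T) (F : T -> R) (g : U -> T) (r : seq U) :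
  {in r, forall u, 0 <= F (g u)} ->
  (forall t, P t -> exists2 u, u \in r & g u = t) ->
  \sum_(t | P t) F t <= \sum_(u <- r) F (g u).
Proof.
move=> F_ge0 cover.
apply: (@le_trans _ _ (\sum_(t | P t) \sum_(u <- r | g u == t) F t)).
  apply: ler_sum => t /cover[u0 u0_in <-].
  by rewrite (big_rem u0) //= eqxx lerDl sumr_ge0 // => u _; apply: F_ge0.
rewrite (exchange_big_dep (Q := fun t u => g u == t) (F := fun t _ => F t)
  xpredT) //=.
rewrite big_seq [X in _ <= X]big_seq.
apply: ler_sum => u u_in; have [Pgu | nPgu] := boolP (P (g u)).
  rewrite (big_pred1 (g u)) // => t /=.
  by rewrite andbC eq_sym; case: eqP => // ->.
rewrite big_pred0 => [|t]; first exact: F_ge0.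
by case: eqP => [<- | _]; rewrite ?andbF ?(negbTE nPgu).
Qed.

Definition edge_seq (V : finType) (s : seq V) : seq {set V} :=
  [seq [set p.1; p.2] | p <- zip s (behead s)].
Arguments edge_seq : simpl never.

Section PathEdges.
Variable V : finType.
Implicit Types (s : seq V) (x y a b : V) (e : {set V}).

Lemma is_edge_set2 a b : a != b -> is_edge [set a; b].
Proof. by rewrite /is_edge cards2 => ->. Qed.

Lemma path_edgesE s : path_edges s = [set e in edge_seq s].
Proof. by []. Qed.

Lemma edge_seq_cons2 a b s :
  edge_seq [:: a, b & s] = [set a; b] :: edge_seq (b :: s).
Proof. by []. Qed.

Lemma edge_seq_cat a s1 b s2 :
  edge_seq (a :: s1 ++ b :: s2) =
  edge_seq (a :: s1) ++ [set last a s1; b] :: edge_seq (b :: s2).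
Proof. by elim: s1 a => [|c s1 IH] a //; rewrite cat_cons !edge_seq_cons2 IH. Qed.

Lemma edge_seq_rcons a s b :
  edge_seq (rcons (a :: s) b) = rcons (edge_seq (a :: s)) [set last a s; b].
Proof. by rewrite -!cats1 cat_cons edge_seq_cat. Qed.

Lemma mem_edge_seq s e y : e \in edge_seq s -> y \in e -> y \in s.
Proof.
elim: s => [|a [|b s] IH] //; rewrite edge_seq_cons2 inE => /predU1P[-> | /IH].
  by case/set2P=> ->; rewrite !inE eqxx ?orbT.
by move=> /[apply] ys; rewrite inE ys orbT.
Qed.

Lemma uniq_edge_seq s : uniq s -> uniq (edge_seq s).
Proof.
elim: s => [|a [|b s] IH] // /andP[a_notin uniq_s].
rewrite edge_seq_cons2 /= IH // andbT.
by apply: contra a_notin => /mem_edge_seq; apply; rewrite set21.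
Qed.

Lemma edge_seq_is_edge s e : uniq s -> e \in edge_seq s -> is_edge e.
Proof.
elim: s => [|a [|b s] IH] // /andP[a_notin uniq_s].
rewrite edge_seq_cons2 inE => /predU1P[-> | /IH]; last exact.
by apply: is_edge_set2; apply: contraNneq a_notin => ->; apply: mem_head.
Qed.

Lemma path_edges_rev s : path_edges (rev s) = path_edges s.
Proof.
apply/setP => e; rewrite !path_edgesE !inE.
elim: s => [|a [|b s] IH] //.
rewrite rev_cons; case def_r: (rev (b :: s)) => [|c u].
  by have := congr1 size def_r; rewrite size_rev.
have last_b : last c u = b.
  by rewrite -[last c u]/(last c (c :: u)) -def_r rev_cons last_rcons.
by rewrite edge_seq_rcons mem_rcons inE -def_r IH edge_seq_cons2 inE last_b setUC.
Qed.

Lemma mem_of_deg_in_path_edges s x : (0 < deg_in (path_edges s) x)%N -> x \in s.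
Proof. by case/card_gt0P => e; rewrite !inE => /andP[/mem_edge_seq]; apply. Qed.

Lemma deg_in_path_edges_interior a s1 x b s2 :
  uniq (a :: s1 ++ x :: b :: s2) ->
  (1 < deg_in (path_edges (a :: s1 ++ x :: b :: s2)) x)%N.
Proof.
move=> uniq_t; set p := last a s1.
have p_notin : p \notin x :: b :: s2.
  move: uniq_t; rewrite -cat_cons cat_uniq => /and3P[_ /hasPn disj _].
  by apply/negP => /disj; rewrite mem_last.
have px_in : [set p; x] \in path_edges (a :: s1 ++ x :: b :: s2).
  by rewrite path_edgesE inE edge_seq_cat mem_cat inE eqxx orbT.
have xb_in : [set x; b] \in path_edges (a :: s1 ++ x :: b :: s2).
  by rewrite path_edgesE inE edge_seq_cat mem_cat edge_seq_cons2 !inE eqxx !orbT.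
have px_ne_xb : [set p; x] != [set x; b].
  apply: contra p_notin => /eqP px_xb; have := set21 p x.
  by rewrite px_xb => /set2P[-> | ->]; rewrite !inE eqxx ?orbT.
apply: leq_trans (subset_leq_card (_ : [set [set p; x]; [set x; b]] \subset _)).
  by rewrite cards2 px_ne_xb.
by apply/subsetP => e /set2P[-> | ->]; rewrite inE ?px_in ?xb_in ?set21 ?set22.
Qed.

Lemma path_copy_deg1_start m E x :
  is_path_copy m E -> deg_in E x = 1%N ->
  exists s, [/\ size s = m, uniq (x :: s) & E = path_edges (x :: s)].
Proof.
case/existsP => -[t size_t] /= /andP[uniq_t /eqP ->] deg1.
have x_in : x \in t by apply: mem_of_deg_in_path_edges; rewrite deg1.
move: size_t uniq_t deg1; case/splitPr: x_in => -[|a s1] s2 size_t uniq_t deg1.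
  by exists s2; split=> //; apply/eqP.
case: s2 => [|b s2] in size_t uniq_t deg1 *.
  exists (rev (a :: s1)); split.
  - by move: size_t; rewrite size_cat addn1 size_rev => /eqP[].
  - by rewrite -cons_uniq -rev_uniq rev_cons revK -cats1.
  - by rewrite -[in RHS]path_edges_rev rev_cons revK -cats1.
by have := deg_in_path_edges_interior uniq_t; rewrite deg1.
Qed.

Fixpoint uniq_seqs (k : nat) (A : {set V}) : seq (seq V) :=
  if k is k'.+1 then
    flatten [seq [seq a :: s | s <- uniq_seqs k' (A :\ a)] | a <- enum A]
  else [:: [::]].

Lemma uniq_seqsP k (A : {set V}) s :
  reflect [/\ size s = k, uniq s & {subset s <= A}] (s \in uniq_seqs k A).
Proof.
elim: k A s => [|k IH] A s /=.
  rewrite mem_seq1; apply: (iffP eqP) => [-> // | [/size0nil]] //.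
apply: (iffP flatten_mapP) => [[a A_a /mapP[t /IH[size_t uniq_t t_sub] ->]] | ].
  rewrite mem_enum in A_a; split=> /=; first by rewrite size_t.
    by rewrite uniq_t andbT; apply/negP => /t_sub; rewrite setD11.
  by move=> y /predU1P[-> // | /t_sub /setD1P[]].
case: s => [|a t] [//= [size_t] /andP[a_notin uniq_t] s_sub].
exists a; first by rewrite mem_enum s_sub ?mem_head.
apply: map_f; apply/IH; split=> // y t_y.
rewrite in_setD1 s_sub ?inE ?t_y ?orbT // andbT.
by apply: contraNneq a_notin => <-.
Qed.

End PathEdges.

Section PathWeights.
Variables (R : realFieldType) (V : finType) (mu : {set V} -> R).
Hypothesis mu_ge0 : forall e, is_edge e -> 0 <= mu e.
Implicit Types (s : seq V) (A : {set V}) (v a : V).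

Definition path_weight s := \prod_(e <- edge_seq s) mu e.

Definition path_sum k A v := \sum_(s <- uniq_seqs k A) path_weight (v :: s).

Definition link_weight A v := \sum_(a in A) mu [set v; a].

Definition inner_weight A := \sum_(e | is_edge e && (e \subset A)) mu e.

Lemma mu_sub_path_edges s : uniq s -> mu_sub mu (path_edges s) = path_weight s.
Proof.
move=> uniq_s; rewrite /mu_sub /path_weight (big_uniq _ (uniq_edge_seq uniq_s)).
by apply: eq_bigl => e; rewrite inE.
Qed.

Lemma path_weight_ge0 s : uniq s -> 0 <= path_weight s.
Proof.
move=> uniq_s; rewrite /path_weight big_seq prodr_ge0 // => e.
by move/(edge_seq_is_edge uniq_s)/mu_ge0.
Qed.

Lemma path_sum0 A v : path_sum 0 A v = 1.
Proof. by rewrite /path_sum big_seq1 /path_weight big_nil. Qed.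

Lemma path_sumS k A v :
  path_sum k.+1 A v = \sum_(a in A) mu [set v; a] * path_sum k (A :\ a) a.
Proof.
rewrite /path_sum /= big_flatten big_map -big_enum /=; apply: eq_bigr => a _.
rewrite big_map mulr_sumr; apply: eq_bigr => s _.
by rewrite /path_weight edge_seq_cons2 big_cons.
Qed.

Lemma link_weight_ge0 A v : v \notin A -> 0 <= link_weight A v.
Proof.
move=> v_notin; apply: sumr_ge0 => a a_in; apply/mu_ge0/is_edge_set2.
by apply: contraNneq v_notin => ->.
Qed.

Lemma inner_weight_ge0 A : 0 <= inner_weight A.
Proof. by apply: sumr_ge0 => e /andP[/mu_ge0]. Qed.

Lemma link_weightE A a :
  a \in A ->
  link_weight (A :\ a) a = \sum_(e | is_edge e && (e \subset A) && (a \in e)) mu e.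
Proof.
move=> a_in; rewrite /link_weight -(big_imset mu (h := fun b => [set a; b])) /=.
  apply: eq_bigl => e; apply/imsetP/idP => [[b /setD1P[b_ne_a b_in] ->] | ].
    rewrite is_edge_set2 1?eq_sym //= set21 andbT.
    by apply/subsetP => y /set2P[-> | ->].
  case/andP => /andP[/cards2P[p [q [p_ne_q ->]]] pq_sub] /set2P[-> | ->].
    by exists q; rewrite // in_setD1 eq_sym p_ne_q (subsetP pq_sub) ?set22.
  by exists p; rewrite 1?setUC // in_setD1 p_ne_q (subsetP pq_sub) ?set21.
move=> b b' /setD1P[b_ne_a _] _ /= ab_ab'.
by have := set22 a b; rewrite ab_ab' => /set2P[/eqP | //]; rewrite (negbTE b_ne_a).
Qed.

Lemma inner_weightD1 A a :
  a \in A -> inner_weight A = link_weight (A :\ a) a + inner_weight (A :\ a).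
Proof.
move=> a_in; rewrite /inner_weight (bigID (fun e : {set V} => a \in e)) /=.
rewrite link_weightE //; congr (_ + _).
by apply: eq_bigl => e; rewrite subsetD1 andbA.
Qed.

Lemma path_sum_le k A v :
  v \notin A -> path_sum k.+1 A v <= link_weight A v * (inner_weight A / k%:R) ^+ k.
Proof.
elim: k A v => [|k IH] A v v_notin.
  by rewrite path_sumS mulr1; apply: ler_sum => a _; rewrite path_sum0 mulr1.
rewrite path_sumS /link_weight mulr_suml; apply: ler_sum => a a_in.
have mu_va_ge0 : 0 <= mu [set v; a].
  by apply/mu_ge0/is_edge_set2; apply: contraNneq v_notin => ->.
apply: (ler_wpM2l mu_va_ge0); rewrite (inner_weightD1 a_in).
have a_notin : a \notin A :\ a by rewrite setD11.
apply: le_trans (IH _ _ a_notin) _.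
exact: AGM_mul_exp (link_weight_ge0 a_notin) (inner_weight_ge0 _).
Qed.

Lemma sum_path_copies_ending_at_le m x :
  \sum_(E : {set {set V}} | is_path_copy m E && (deg_in E x == 1%N)) mu_sub mu E
  <= path_sum m ([set: V] :\ x) x.
Proof.
have uniq_xs s : s \in uniq_seqs m ([set: V] :\ x) -> uniq (x :: s).
  case/uniq_seqsP => _ uniq_s s_sub; rewrite /= uniq_s andbT.
  by apply/negP => /s_sub; rewrite setD11.
have weightE s : s \in uniq_seqs m ([set: V] :\ x) ->
    path_weight (x :: s) = mu_sub mu (path_edges (x :: s)).
  by move=> /uniq_xs/mu_sub_path_edges ->.
rewrite /path_sum big_seq (eq_bigr _ weightE) -big_seq.
apply: ler_sum_cover => [s /uniq_xs uniq_s | E /andP[copy /eqP deg1]].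
  by rewrite mu_sub_path_edges // path_weight_ge0.
have [s [size_s /andP[x_notin uniq_s] ->]] := path_copy_deg1_start copy deg1.
exists s => //; apply/uniq_seqsP; split=> // y y_in.
by rewrite in_setD1 in_setT andbT; apply: contraNneq x_notin => <-.
Qed.

End PathWeights.

Theorem proposition4p4 (R : realFieldType) (V : finType) (x : V)
    (mu : {set V} -> R) (m : nat) :
  edge_prob_measure mu -> (2 <= m)%N ->
  \sum_(E : {set {set V}} | is_path_copy m E && (deg_in E x == 1%N))
      mu_sub mu E
  <= mubar mu x * ((1 - mubar mu x) / (m.-1)%:R) ^+ m.-1.
Proof.
move=> [mu_ge0 mu_total]; case: m => // k _ /=.
set A := [set: V] :\ x.
have link_x : link_weight mu A x = mubar mu x.
  by apply: eq_bigl => y; rewrite in_setD1 in_setT andbT.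
have inner_A : inner_weight mu A = 1 - mubar mu x.
  have inner_T : inner_weight mu [set: V] = 1.
    by rewrite -mu_total; apply: eq_bigl => e; rewrite subsetT andbT.
  by rewrite -inner_T (inner_weightD1 mu (in_setT x)) link_x addrC addKr.
apply: le_trans (sum_path_copies_ending_at_le mu_ge0 k.+1 x) _.
by rewrite -inner_A -link_x path_sum_le // setD11.
Qed.
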